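(* Let $k\ge 4$ be even and let $G=(V,E)$ be a $k$-uniform hyperstar of size $d\ge 2$, with $V=[n]$, $E=\{e_1,\ldots,e_d\}$, and heart the vertex $1$. Let $\mathcal L$ be its Laplacian tensor and, for $r=0,1,\ldots,d$, let $f_r(\lambda)=(\lambda-d)(1-\lambda)^{k-1}+r$. Then: (i) A real number $\lambda\neq 1$ is an H-eigenvalue of $\mathcal L$ if and only if it is a real root of $f_r$ for some $r\in\{0,1,\ldots,d\}$. (ii) If $\lambda\neq1$ is a real root of $f_r$, then, up to a nonzero constant multiple, the H-eigenvectors of $\mathcal L$ corresponding to $\lambda$ are exactly the vectors $\mathbf x$ obtained as follows: take $x_1=1-\lambda$; choose any $r$ edges of $G$ and assign to the vertices other than $1$ of these $r$ edges values $\pm1$ such that in each chosen edge the number of vertices assigned $-1$ is even; set $x_j=0$ for all other vertices $j$.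
   Context: A $k$-uniform hyperstar of size $d$ is a hypergraph whose vertex set is a disjoint union $V=V_0\cup V_1\cup\cdots\cup V_d$ with $|V_0|=1$, $|V_1|=\cdots=|V_d|=k-1$, and edge set $\{V_0\cup V_i: i\in[d]\}$; the vertex in $V_0$ is the heart. For a $k$-uniform hypergraph with $d_i$ the number of edges containing $i$, the Laplacian tensor $\mathcal L=\mathcal D-\mathcal A$ ($\mathcal D$ diagonal with entries $d_i$, $\mathcal A$ with entries $\frac1{(k-1)!}$ at index tuples forming an edge and $0$ otherwise) satisfies $(\mathcal L\mathbf x^{k-1})_i=d_ix_i^{k-1}-\sum_{e\in E,\,i\in e}\prod_{s\in e\setminus\{i\}}x_s$. A real $\lambda$ is an H-eigenvalue of $\mathcal L$ with H-eigenvector $\mathbf x\in\mathbb R^n\setminus\{0\}$ if $(\mathcal L\mathbf x^{k-1})_i=\lambda x_i^{k-1}$ for all $i\in[n]$. *)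

From mathcomp Require Import all_boot all_order all_algebra.
Set Implicit Arguments. Unset Strict Implicit. Unset Printing Implicit Defensive.
Import Order.TTheory GRing.Theory Num.Theory.
Local Open Scope ring_scope.

(* E is a k-uniform hyperstar of size d with heart h:
   V = {h} u V_1 u ... u V_d (disjoint), |V_i| = k-1, edges {h} u V_i. *)
Definition is_hyperstar (n k d : nat) (E : {set {set 'I_n}}) (h : 'I_n) : Prop :=
  [/\ #|E| = d,
      (forall e, e \in E -> h \in e /\ #|e| = k),
      (forall e1 e2, e1 \in E -> e2 \in E -> e1 != e2 -> e1 :&: e2 = [set h])
    & (forall v : 'I_n, exists2 e, e \in E & v \in e)].

Definition hdeg (n : nat) (E : {set {set 'I_n}}) (i : 'I_n) : nat :=
  #|[set e in E | i \in e]|.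

(* (L x^{k-1})_i = d_i x_i^{k-1} - sum_{e in E, i in e} prod_{s in e \ {i}} x_s *)
Definition laplacian_apply (R : nzRingType) (n k : nat) (E : {set {set 'I_n}})
  (x : 'I_n -> R) (i : 'I_n) : R :=
  (hdeg E i)%:R * x i ^+ (k.-1)
  - \sum_(e in E | i \in e) \prod_(s in e :\ i) x s.

Definition H_eigenvector (R : nzRingType) (n k : nat) (E : {set {set 'I_n}})
  (lambda : R) (x : 'I_n -> R) : Prop :=
  (exists i, x i != 0) /\
  forall i, laplacian_apply k E x i = lambda * x i ^+ (k.-1).

Definition H_eigenvalue (R : nzRingType) (n k : nat) (E : {set {set 'I_n}})
  (lambda : R) : Prop :=
  exists x : 'I_n -> R, H_eigenvector k E lambda x.

Definition fr (R : nzRingType) (k d r : nat) (lambda : R) : R :=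
  (lambda - d%:R) * (1 - lambda) ^+ (k.-1) + r%:R.

Definition star_vector (R : nzRingType) (n : nat) (E : {set {set 'I_n}}) (h : 'I_n)
  (lambda : R) (r : nat) (x : 'I_n -> R) : Prop :=
  exists F : {set {set 'I_n}},
  [/\ F \subset E /\ #|F| = r,
      x h = 1 - lambda,
      (forall v, v != h -> (exists2 e, e \in F & v \in e) ->
                 (x v = 1 \/ x v = -1)),
      (forall e, e \in F -> ~~ odd #|[set v in e :\ h | x v == -1]|)
    & (forall v, v != h -> (forall e, e \in F -> v \notin e) -> x v = 0)].

From mathcomp Require Import all_boot all_order all_algebra.
From mathcomp Require Import ring zify.
Import Order.TTheory GRing.Theory Num.Theory.
Local Open Scope ring_scope.
Set Implicit Arguments. Unset Strict Implicit. Unset Printing Implicit Defensive.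

(* Scale an H-eigenvector so that x_h = 1 - lambda; this is possible because
   x_h = 0 would force (1 - lambda) x_v^(k-1) = 0 at every other vertex.  At a
   non-heart vertex v of an edge e the eigen-equation then reads
   x_v^(k-1) = prod_{s in e \ {h,v}} x_s, so x_v^k = P_e := prod_{s in e \ h} x_s
   for every such v.  Multiplying over the k-1 vertices of e \ h gives
   P_e^k = P_e^(k-1), hence P_e is 0 or 1, and since k is even the entries on
   e \ h are then all 0, or all +-1 with an even number of -1.  The equation at
   the heart becomes f_r(lambda) = 0, where r counts the edges with P_e = 1.
   Conversely such vectors satisfy every equation, and f_r(lambda) = 0
   determines r. *)

Lemma expr_even_eq1 (R : realDomainType) (k : nat) (y : R) :
  ~~ odd k -> (0 < k)%N -> y ^+ k = 1 -> y = 1 \/ y = -1.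
Proof.
move=> k_even k_gt0; rewrite -[k]odd_double_half (negbTE k_even) add0n -muln2.
rewrite mulnC exprM => /eqP; rewrite pexpr_eq1 ?sqr_ge0 //; last first.
  by case: (k) k_even k_gt0 => [|[|m]].
by rewrite sqrf_eq1 => /orP[] /eqP; [left | right].
Qed.

Lemma prod_sign (R : comNzRingType) (I : finType) (A : {set I}) (y : I -> R) :
  {in A, forall v, y v = 1 \/ y v = -1} ->
  \prod_(v in A) y v = (-1) ^+ #|[set v in A | y v == -1]|.
Proof.
move=> y_sign; rewrite (bigID (fun v => y v == -1)) /=.
rewrite [X in _ * X]big1 ?mulr1; last first.
  by move=> v /andP[vA /negbTE yvN]; case: (y_sign v vA) => // y_v; rewrite y_v eqxx in yvN.
rewrite -prodr_const; under eq_bigr => v /andP[_ /eqP ->] do [].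
by apply: eq_bigl => v; rewrite inE.
Qed.

Lemma sum_indicator (R : nzSemiRingType) (I : finType) (A B : {set I}) (f : I -> R) :
  B \subset A -> {in B, forall i, f i = 1} -> {in A :\: B, forall i, f i = 0} ->
  \sum_(i in A) f i = #|B|%:R.
Proof.
move=> BA f1 f0; rewrite (big_setID B) /= (setIidPr BA) [X in _ + X]big1 // addr0.
by rewrite (eq_bigr (fun=> 1)) // sumr_const.
Qed.

Lemma prod_set_eq0 (R : comPzSemiRingType) (I : finType) (A : {set I}) (y : I -> R) :
  A != set0 -> {in A, forall u, y u = 0} -> \prod_(u in A) y u = 0.
Proof. by case/set0Pn => w wA y0; rewrite (big_setD1 w wA) /= y0 // mul0r. Qed.

Lemma even_sign_exprD1 (R : comNzRingType) (I : finType) (A : {set I}) (y : I -> R) m v :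
  odd m -> v \in A -> {in A, forall u, y u = 1 \/ y u = -1} ->
  ~~ odd #|[set u in A | y u == -1]| -> y v ^+ m = \prod_(u in A :\ v) y u.
Proof.
move=> m_odd vA y_sign even_neg.
have := prod_sign y_sign; rewrite -signr_odd (negbTE even_neg) expr0 (big_setD1 v vA) /=.
case: (y_sign v vA) => ->; rewrite ?mul1r ?expr1n // -signr_odd m_odd expr1 mulN1r.
by move/eqP; rewrite eqr_oppLR => /eqP.
Qed.

Lemma fr_inj (R : numDomainType) (k d r r' : nat) (lambda : R) :
  fr k d r lambda = fr k d r' lambda -> r = r'.
Proof. by move/addrI/eqP; rewrite eqr_nat => /eqP. Qed.

Definition edge_prod (R : nzRingType) (n : nat) (h : 'I_n) (y : 'I_n -> R)
    (e : {set 'I_n}) : R :=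
  \prod_(s in e :\ h) y s.

Section Hyperstar.

Variables (n k d : nat) (E : {set {set 'I_n}}) (h : 'I_n).
Hypothesis HS : is_hyperstar k d E h.

Lemma hyperstar_card : #|E| = d.
Proof. by case: HS. Qed.

Lemma hyperstar_heart e : e \in E -> h \in e.
Proof. by case: HS => _ edges _ _ /edges[]. Qed.

Lemma hyperstar_cover v : exists2 e, e \in E & v \in e.
Proof. by case: HS => _ _ _. Qed.

Lemma hyperstar_cardD1 e i : e \in E -> i \in e -> #|e :\ i| = k.-1.
Proof.
case: HS => _ edges _ _ eE ie.
by rewrite -(edges e eE).2 (cardsD1 i e) ie.
Qed.

Lemma hyperstar_edge_uniq e e' v :
  e \in E -> e' \in E -> v != h -> v \in e -> v \in e' -> e' = e.
Proof.
case: HS => _ _ meet _ eE e'E vh ve ve'.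
apply/eqP/negPn/negP => e'e; move: (meet e' e e'E eE e'e) => /setP/(_ v).
by rewrite inE ve ve' in_set1 (negbTE vh).
Qed.

Lemma laplacian_heart (R : nzRingType) (x : 'I_n -> R) :
  laplacian_apply k E x h = d%:R * x h ^+ k.-1 - \sum_(e in E) edge_prod h x e.
Proof.
have edges_h : [set e in E | h \in e] = E.
  by apply/setP => e; rewrite inE andb_idr //; apply: hyperstar_heart.
rewrite /laplacian_apply /hdeg edges_h hyperstar_card; congr (_ - _).
by apply: eq_bigl => e; rewrite andb_idr //; apply: hyperstar_heart.
Qed.

Lemma laplacian_nonheart (R : comNzRingType) (x : 'I_n -> R) v e :
  v != h -> e \in E -> v \in e ->
  laplacian_apply k E x v = x v ^+ k.-1 - x h * \prod_(s in e :\ h :\ v) x s.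
Proof.
move=> vh eE ve.
have edges_v : [set e' in E | v \in e'] = [set e].
  apply/setP => e'; rewrite !inE; apply/andP/eqP => [[e'E ve']|->//].
  exact: hyperstar_edge_uniq eE e'E vh ve ve'.
rewrite /laplacian_apply /hdeg edges_v cards1 mul1r.
rewrite (eq_bigl (fun e' => e' \in [set e])); last by move=> e'; rewrite -edges_v inE.
have h_ev : h \in e :\ v by rewrite !inE eq_sym vh hyperstar_heart.
rewrite big_set1 (big_setD1 h h_ev); congr (_ - _ * _).
by apply: eq_bigl => s; rewrite !inE andbCA.
Qed.

Lemma laplacian_scale (R : comNzRingType) (c : R) (x y : 'I_n -> R) i :
  (forall j, x j = c * y j) ->
  laplacian_apply k E x i = c ^+ k.-1 * laplacian_apply k E y i.
Proof.
move=> xE; rewrite /laplacian_apply xE exprMn mulrBr mulrCA; congr (_ - _).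
rewrite mulr_sumr; apply: eq_bigr => e /andP[eE ie].
by rewrite -(hyperstar_cardD1 eE ie) -prodrMl; apply: eq_bigr.
Qed.

Lemma star_vector_le (R : nzRingType) (lambda : R) r (y : 'I_n -> R) :
  star_vector E h lambda r y -> (r <= d)%N.
Proof. by case=> F [[FE <-] _ _ _ _]; rewrite -hyperstar_card subset_leq_card. Qed.

End Hyperstar.

Section Eigen.

Variables (R : realFieldType) (n k d : nat) (E : {set {set 'I_n}}) (h : 'I_n) (lambda : R).
Hypothesis HS : is_hyperstar k d E h.
Hypotheses (k_even : ~~ odd k) (k_ge4 : (4 <= k)%N) (lambda_neq1 : lambda != 1).

Let k_gt0 : (0 < k)%N.
Proof. lia. Qed.

Let k_gt1 : (1 < k)%N.
Proof. lia. Qed.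

Let km1_odd : odd k.-1.
Proof. by move: k_even; rewrite -[k]prednK //= negbK. Qed.

Let one_sub_lambda_neq0 : 1 - lambda != 0.
Proof. by rewrite subr_eq0 eq_sym. Qed.

Lemma H_eigenvector_scale c (x y : 'I_n -> R) :
  c != 0 -> (forall i, x i = c * y i) ->
  H_eigenvector k E lambda y -> H_eigenvector k E lambda x.
Proof.
move=> c_neq0 xE [[i yi] eig_y]; split; first by exists i; rewrite xE mulf_neq0.
by move=> j; rewrite (laplacian_scale HS j xE) eig_y xE exprMn mulrCA.
Qed.

Lemma nonheart_eigen_eqE (y : 'I_n -> R) e v :
  y h = 1 - lambda -> e \in E -> v \in e :\ h ->
  (laplacian_apply k E y v == lambda * y v ^+ k.-1) =
  (y v ^+ k.-1 == \prod_(s in e :\ h :\ v) y s).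
Proof.
move=> yh eE; rewrite in_setD1 => /andP[vh ve].
rewrite (laplacian_nonheart HS _ vh eE ve) yh -subr_eq0.
set P := \prod_(s in _) _; set Y := y v ^+ k.-1.
have -> : Y - (1 - lambda) * P - lambda * Y = (1 - lambda) * (Y - P) by ring.
by rewrite mulf_eq0 (negbTE one_sub_lambda_neq0) subr_eq0.
Qed.

Lemma heart_eigen_eqE (y : 'I_n -> R) :
  y h = 1 - lambda ->
  (laplacian_apply k E y h == lambda * y h ^+ k.-1) =
  ((lambda - d%:R) * (1 - lambda) ^+ k.-1 + \sum_(e in E) edge_prod h y e == 0).
Proof.
move=> yh; rewrite (laplacian_heart HS) yh -subr_eq0 -oppr_eq0.
by congr (_ == 0); ring.
Qed.

Lemma H_eigenvector_heart_neq0 (x : 'I_n -> R) : H_eigenvector k E lambda x -> x h != 0.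
Proof.
case=> [[i xi] eig_x]; apply: contraNneq xi => xh0.
have [-> | ih] := eqVneq i h; first by rewrite xh0.
have [e eE ie] := hyperstar_cover HS i.
move/eqP: (eig_x i); rewrite (laplacian_nonheart HS _ ih eE ie) xh0 mul0r subr0.
rewrite -subr_eq0 -{1}[x i ^+ _]mul1r -mulrBl mulf_eq0 (negbTE one_sub_lambda_neq0).
by rewrite expf_eq0 => /andP[].
Qed.

Lemma H_eigenvector_normalize (x : 'I_n -> R) :
  H_eigenvector k E lambda x ->
  exists c (y : 'I_n -> R),
    [/\ c != 0, H_eigenvector k E lambda y, y h = 1 - lambda & forall i, x i = c * y i].
Proof.
move=> eig_x; have xh_neq0 := H_eigenvector_heart_neq0 eig_x.
pose c := x h / (1 - lambda).
have c_neq0 : c != 0 by rewrite mulf_neq0 ?invr_neq0.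
exists c, (fun i => c^-1 * x i); split => //.
- exact: (H_eigenvector_scale (invr_neq0 c_neq0) (fun=> erefl) eig_x).
- by rewrite invf_div divfK.
- by move=> i; rewrite mulVKf.
Qed.

Lemma edgeD1_neq0 e : e \in E -> e :\ h != set0.
Proof. by move=> eE; rewrite -card_gt0 (hyperstar_cardD1 HS eE (hyperstar_heart HS eE)); lia. Qed.

Lemma edgeD2_neq0 e v : e \in E -> v \in e :\ h -> e :\ h :\ v != set0.
Proof.
move=> eE ve; have := cardsD1 v (e :\ h).
by rewrite ve (hyperstar_cardD1 HS eE (hyperstar_heart HS eE)) -card_gt0 /=; lia.
Qed.

Section Normalized.

Variable y : 'I_n -> R.
Hypotheses (eig_y : H_eigenvector k E lambda y) (yh : y h = 1 - lambda).

Lemma edge_prod_exprk e v : e \in E -> v \in e :\ h -> y v ^+ k = edge_prod h y e.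
Proof.
move=> eE ve; move/eqP: (eig_y.2 v); rewrite (nonheart_eigen_eqE yh eE ve) => /eqP.
by rewrite /edge_prod (big_setD1 v ve) /= => <-; rewrite -exprS prednK.
Qed.

Lemma edge_prod_dichotomy e : e \in E ->
  (edge_prod h y e = 0 /\ {in e :\ h, forall v, y v = 0}) \/
  (edge_prod h y e = 1 /\ {in e :\ h, forall v, y v = 1 \/ y v = -1}).
Proof.
move=> eE; have [P0 | P_neq0] := eqVneq (edge_prod h y e) 0.
  left; split => // v ve; move/eqP: (edge_prod_exprk eE ve).
  by rewrite P0 expf_eq0 => /andP[_ /eqP].
right; have P1 : edge_prod h y e = 1.
  have : edge_prod h y e ^+ k = edge_prod h y e ^+ k.-1.
    rewrite {1}/edge_prod -prodrXl -(hyperstar_cardD1 HS eE (hyperstar_heart HS eE)).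
    by rewrite -prodr_const; apply: eq_bigr => v; apply: edge_prod_exprk.
  rewrite -[k in _ ^+ k = _]prednK // exprS -[X in _ = X]mul1r.
  exact: (mulIf (expf_neq0 k.-1 P_neq0)).
split => // v ve; apply: (expr_even_eq1 k_even) => //.
by rewrite (edge_prod_exprk eE ve).
Qed.

Lemma normalized_H_eigenvector_star :
  exists2 r, fr k d r lambda = 0 & star_vector E h lambda r y.
Proof.
pose F := [set e in E | edge_prod h y e == 1].
have FE : F \subset E by apply/subsetP => e; rewrite inE => /andP[].
have edge_notF e : e \in E :\: F -> {in e :\ h, forall v, y v = 0}.
  case/setDP => eE; rewrite inE eE /= => P_neq1.
  by case: (edge_prod_dichotomy eE) => [[_ //] | [P1 _]]; rewrite P1 eqxx in P_neq1.
have sum_F : \sum_(e in E) edge_prod h y e = #|F|%:R.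
  apply: sum_indicator => // e; first by rewrite inE => /andP[_ /eqP].
  move=> eF; have /setDP[eE _] := eF.
  by apply: prod_set_eq0; [exact: edgeD1_neq0 | exact: edge_notF].
exists #|F|; first by apply/eqP; rewrite /fr -sum_F -heart_eigen_eqE //; apply/eqP; case: eig_y.
exists F; split => //.
- move=> v vh [e]; rewrite inE => /andP[eE /eqP P1] ve.
  case: (edge_prod_dichotomy eE) => [[P0 _] | [_ ]]; last by apply; rewrite !inE vh.
  by move: P1; rewrite P0 => /eqP; rewrite eq_sym oner_eq0.
- move=> e; rewrite inE => /andP[eE /eqP P1].
  case: (edge_prod_dichotomy eE) => [[P0 _] | [_ y_sign]].
    by move: P1; rewrite P0 => /eqP; rewrite eq_sym oner_eq0.
  move: P1; rewrite /edge_prod (prod_sign y_sign) -signr_odd.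
  by case: (odd _) => //= /eqP; rewrite expr1 -subr_eq0 -opprD oppr_eq0 -mulr2n pnatr_eq0.
- move=> v vh v_notF; have [e eE ve] := hyperstar_cover HS v.
  apply: (edge_notF e); last by rewrite !inE vh.
  by rewrite inE eE andbT; apply: contraT; rewrite negbK => /v_notF; rewrite ve.
Qed.

End Normalized.

Lemma star_vector_H_eigenvector (y : 'I_n -> R) r :
  fr k d r lambda = 0 -> star_vector E h lambda r y -> H_eigenvector k E lambda y.
Proof.
move=> fr0 [F [[FE Fr] yh y_sign y_even y0]].
have edgeF e : e \in F -> {in e :\ h, forall v, y v = 1 \/ y v = -1}.
  by move=> eF v /setD1P[vh ve]; apply: y_sign => //; exists e.
have edge_notF e : e \in E :\: F -> {in e :\ h, forall v, y v = 0}.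
  case/setDP => eE eF v /setD1P[vh ve]; apply: y0 => // e' e'F.
  apply: contraNN eF => ve'.
  by rewrite (hyperstar_edge_uniq HS (subsetP FE _ e'F) eE vh ve' ve).
split; first by exists h; rewrite yh.
move=> i; apply/eqP; have [-> | ih] := eqVneq i h.
  rewrite heart_eigen_eqE // -[X in _ == X]fr0 /fr (sum_indicator FE) ?Fr //.
    move=> e eF; rewrite /edge_prod (prod_sign (edgeF e eF)) -signr_odd.
    by rewrite (negbTE (y_even e eF)).
  move=> e eF; have /setDP[eE _] := eF.
  by apply: prod_set_eq0; [exact: edgeD1_neq0 | exact: edge_notF].
have [e eE ie] := hyperstar_cover HS i.
have ie' : i \in e :\ h by rewrite !inE ih.
rewrite (nonheart_eigen_eqE yh eE ie'); apply/eqP.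
have [eF | eF] := boolP (e \in F).
  exact: even_sign_exprD1 km1_odd ie' (edgeF e eF) (y_even e eF).
have eEF : e \in E :\: F by rewrite inE eF eE.
rewrite (edge_notF e eEF i ie') expr0n eqn0Ngt ltn_predRL k_gt1 /=.
by symmetry; apply: prod_set_eq0 => [|u /setD1P[_]]; [exact: edgeD2_neq0 | exact: edge_notF].
Qed.

Lemma star_vector_exists r : (r <= d)%N -> exists y : 'I_n -> R, star_vector E h lambda r y.
Proof.
move=> r_le_d.
have /card_gt0P[F] : (0 < #|[set F : {set {set 'I_n}} | F \subset E & #|F| == r]|)%N.
  by rewrite cards_draws bin_gt0 (hyperstar_card HS).
rewrite inE => /andP[FE /eqP Fr].
exists (fun v => if v == h then 1 - lambda else (v \in cover F)%:R); exists F; split => //.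
- by rewrite eqxx.
- by move=> v /negbTE -> [e eF ve]; left; rewrite (_ : v \in cover F) //; apply/bigcupP; exists e.
- move=> e eF; rewrite (_ : [set _ in _ | _] = set0) ?cards0 //.
  apply/setP => v; rewrite !inE; apply/negP => /andP[/andP[vh ve]].
  rewrite (negbTE vh) (_ : v \in cover F); last by apply/bigcupP; exists e.
  by rewrite -addr_eq0 -mulr2n pnatr_eq0.
- move=> v /negbTE -> v_notF; case: bigcupP => [[e eF ve] | //].
  by move: (v_notF e eF); rewrite ve.
Qed.

End Eigen.

Theorem proposition5p2 (R : realFieldType) (n k d : nat)
    (E : {set {set 'I_n}}) (h : 'I_n) :
  ~~ odd k -> (4 <= k)%N -> (2 <= d)%N -> is_hyperstar k d E h ->
  (forall lambda : R, lambda != 1 ->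
     (H_eigenvalue k E lambda <-> exists2 r : nat, (r <= d)%N & fr k d r lambda = 0))
  /\
  (forall (r : nat) (lambda : R), (r <= d)%N -> lambda != 1 -> fr k d r lambda = 0 ->
     forall x : 'I_n -> R,
       H_eigenvector k E lambda x <->
       exists2 c : R, c != 0 &
         exists2 y : 'I_n -> R, star_vector E h lambda r y & forall i, x i = c * y i).
Proof.
move=> k_even k_ge4 _ HS; split.
- move=> lambda lambda_neq1; split.
  + case=> x /(H_eigenvector_normalize HS lambda_neq1) [c [y [_ eig_y yh _]]].
    have [r fr0 star_y] := normalized_H_eigenvector_star HS k_even k_ge4 lambda_neq1 eig_y yh.
    by exists r => //; exact: (star_vector_le HS star_y).
  + case=> r r_le_d fr0; have [y star_y] := star_vector_exists lambda HS r_le_d.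
    by exists y; exact: (star_vector_H_eigenvector HS k_even k_ge4 lambda_neq1 fr0 star_y).
- move=> r lambda _ lambda_neq1 fr0 x; split.
  + case/(H_eigenvector_normalize HS lambda_neq1) => c [y [c_neq0 eig_y yh xE]].
    have [r' fr0' star_y] := normalized_H_eigenvector_star HS k_even k_ge4 lambda_neq1 eig_y yh.
    by exists c => //; exists y; rewrite // (fr_inj (etrans fr0 (esym fr0'))).
  + case=> c c_neq0 [y star_y xE]; apply: (H_eigenvector_scale HS c_neq0 xE).
    exact: (star_vector_H_eigenvector HS k_even k_ge4 lambda_neq1 fr0 star_y).
Qed.
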